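(* Let $A$ be a meet-complemented lattice in which $\Box x$ exists for every $x\in A$, and let $a,b\in A$. Then (i) $\Box(a\wedge b)\le\Box a\wedge\Box b$; (ii) $\Box a\vee\Box b\le\Box(a\vee b)$; (iii) $\Box(a\vee\neg b)\wedge b\le\Box a$; (iv) $\Box(a\vee b)\wedge\neg b\le\Box a$; (v) $\Box a\wedge\Box\neg a=0$; (vi) $\Box 0=0$; (vii) $\Box a=1$ iff $a=1$.
   Context: A meet-complemented lattice is a lattice $(L,\le)$ (not necessarily distributive) such that for every $a\in L$ the element $\neg a=\max\{b\in L: a\wedge b\le c\ \text{for all } c\in L\}$ exists; it is bounded with bottom $0$ and top $1$. For $a\in L$, $\Box a=\max\{b\in L: a\vee\neg b=1\}$. *)

From HB Require Import structures.
From mathcomp Require Import all_boot all_order.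
Set Implicit Arguments. Unset Strict Implicit. Unset Printing Implicit Defensive.
Import Order.TTheory.
Local Open Scope order_scope.

Definition is_max (d : Order.disp_t) (L : porderType d) (S : L -> Prop) (m : L) : Prop :=
  S m /\ (forall b, S b -> b <= m).

Definition is_meet_compl (d : Order.disp_t) (L : tbLatticeType d) (neg : L -> L) : Prop :=
  forall a : L, is_max (fun b : L => forall c : L, a `&` b <= c) (neg a).

Definition is_box (d : Order.disp_t) (L : tbLatticeType d) (neg box : L -> L) : Prop :=
  forall a : L, is_max (fun b : L => a `|` neg b = \top) (box a).

From HB Require Import structures.
From mathcomp Require Import all_boot all_order.
Set Implicit Arguments. Unset Strict Implicit. Unset Printing Implicit Defensive.
Import Order.TTheory.
Local Open Scope order_scope.

(* The meet-complement is an antitone Galois connection with itself: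
   [z <= neg x] iff [x `&` z = \bot] iff [x <= neg z].  The box is
   characterised by [y <= box x] iff [x `|` neg y = \top].  All seven
   items then follow from two facts: [box x <= neg (neg x)], and the
   "absorption" bound [box y `&` z <= box a] whenever [y <= a `|` neg z]. *)

Section MeetComplementedBox.
Variables (d : Order.disp_t) (A : tbLatticeType d) (neg box : A -> A).
Hypothesis neg_max : is_meet_compl neg.
Hypothesis box_max : is_box neg box.

Lemma meetx_neg x : x `&` neg x = \bot.
Proof. by apply/eqP; rewrite -lex0; case: (neg_max x) => /(_ \bot). Qed.

Lemma le_neg_meet x z : (z <= neg x) <-> (x `&` z = \bot).
Proof.
split=> [z_le | xz0].
  by apply/eqP; rewrite -lex0 -(meetx_neg x) leI2.
by case: (neg_max x) => _; apply=> c; rewrite xz0 le0x.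
Qed.

Lemma le_neg_sym x z : (z <= neg x) <-> (x <= neg z).
Proof. by split=> /le_neg_meet zx0; apply/le_neg_meet; rewrite meetC. Qed.

Lemma neg_antimono x y : x <= y -> neg y <= neg x.
Proof. by move=> le_xy; apply/le_neg_sym; apply: le_trans le_xy _; apply/le_neg_sym. Qed.

Lemma le_negneg x : x <= neg (neg x).
Proof. exact/le_neg_sym. Qed.

Lemma neg1 : neg \top = \bot.
Proof. by rewrite -(meetx_neg \top) meet1x. Qed.

Lemma neg0 : neg \bot = \top.
Proof. by apply/eqP; rewrite -le1x; apply/le_neg_meet; rewrite meet0x. Qed.

Lemma le_negneg_of_join_neg x y : x `|` neg y = \top -> y <= neg (neg x).
Proof.
move=> xny1; apply/le_neg_sym/le_neg_meet.
set z := y `&` neg x.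
have negz1 : neg z = \top.
  have le_x : x <= neg z by apply/le_neg_sym; rewrite leIr.
  by apply/eqP; rewrite -le1x -xny1 leUx le_x neg_antimono ?leIl.
by rewrite -(meetx_neg z) negz1 meetx1.
Qed.

Lemma le_boxP x y : (y <= box x) <-> (x `|` neg y = \top).
Proof.
split=> [le_y_box | ]; last by case: (box_max x) => _; apply.
case: (box_max x) => xnbox1 _.
by apply/eqP; rewrite -le1x -xnbox1 leU2 ?neg_antimono.
Qed.

Lemma join_neg_box x : x `|` neg (box x) = \top.
Proof. exact/le_boxP. Qed.

Lemma box_le_negneg x : box x <= neg (neg x).
Proof. exact/le_negneg_of_join_neg/join_neg_box. Qed.

Lemma box_mono x y : x <= y -> box x <= box y.
Proof.
move=> le_xy; apply/le_boxP/eqP; rewrite -le1x -(join_neg_box x).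
by rewrite leU2.
Qed.

Lemma box_meet_le y a z : y <= a `|` neg z -> box y `&` z <= box a.
Proof.
move=> le_y; apply/le_boxP/eqP; rewrite -le1x -(join_neg_box y).
have le_neg_z : neg z <= neg (box y `&` z) by rewrite neg_antimono ?leIr.
have le_neg_box : neg (box y) <= neg (box y `&` z) by rewrite neg_antimono ?leIl.
rewrite leUx (le_trans le_neg_box) ?leUr // andbT.
by rewrite (le_trans le_y) // leU2.
Qed.

Lemma box_meet_box_neg x : box x `&` box (neg x) = \bot.
Proof.
have box_neg_le : box (neg x) <= neg x.
  exact: le_trans (box_le_negneg _) (neg_antimono (le_negneg x)).
apply/eqP; rewrite -lex0 -(meetx_neg (neg x)) meetC.
by rewrite leI2 ?box_le_negneg.
Qed.

Lemma box0 : box \bot = \bot.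
Proof. by apply/eqP; rewrite -lex0 -[X in _ <= X]neg1 -neg0 box_le_negneg. Qed.

Lemma box1 : box \top = \top.
Proof. by apply/eqP; rewrite -le1x; apply/le_boxP; rewrite join1x. Qed.

Lemma box_eq1 x : (box x = \top) <-> (x = \top).
Proof.
split=> [box1x | ->]; last exact: box1.
by rewrite -[x]joinx0 -neg1 -box1x join_neg_box.
Qed.

End MeetComplementedBox.

Theorem proposition2 (d : Order.disp_t) (A : tbLatticeType d) (neg box : A -> A)
  (Hneg : is_meet_compl neg) (Hbox : is_box neg box) (a b : A) :
  (box (a `&` b) <= box a `&` box b) /\
  (box a `|` box b <= box (a `|` b)) /\
  (box (a `|` neg b) `&` b <= box a) /\
  (box (a `|` b) `&` neg b <= box a) /\
  (box a `&` box (neg a) = \bot) /\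
  (box \bot = \bot) /\
  (box a = \top <-> a = \top).
Proof.
have mono := box_mono Hneg Hbox.
split; first by rewrite lexI !mono ?leIl ?leIr.
split; first by rewrite leUx !mono ?leUl ?leUr.
have meet_le := box_meet_le Hneg Hbox.
split; first exact: meet_le.
split; first exact/meet_le/leU2/(le_negneg Hneg).
split; first exact: box_meet_box_neg Hneg Hbox a.
split; first exact: box0 Hneg Hbox.
exact: box_eq1 Hneg Hbox a.
Qed.
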